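(* There is an absolute constant $C$ such that for every $n$ and every $0<B=B(n)<n$ there exists a subspace $\mathcal{M}\subseteq\mathbb{C}^{2^n}$ of dimension at least $2^B$ that is $(\mathcal{E}_{\mathrm{bitflip}},\varepsilon)$ immune with $\varepsilon\le C\,\frac{B\log n}{n}$.
   Context: $\mathbb{C}^{2^n}$ has standard basis $\{|x\rangle : x\in\{0,1\}^n\}$. For $i\in[n]$, $S\subseteq\{0,1\}^{n-1}$, $E_{i,S}$ is the linear operator with $E_{i,S}|x\rangle=|x\oplus e_i\rangle$ if $(x_1,\dots,x_{i-1},x_{i+1},\dots,x_n)\in S$ and $E_{i,S}|x\rangle=|x\rangle$ otherwise (a controlled bit flip of qubit $i$); $\mathcal{E}_{\mathrm{bitflip}}=\{E_{i,S}: i\in[n], S\subseteq\{0,1\}^{n-1}\}$. A subspace $\mathcal{M}$ is $(\mathcal{E},\varepsilon)$ immune if for every $X\in\mathcal{E}$ and every $\phi\in\mathcal{M}$, $|\phi^*X\phi|\ge(1-\varepsilon)|\phi^*\phi|$. *)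

From mathcomp Require Import all_boot all_algebra.
From mathcomp Require Import reals exp Rstruct.
From mathcomp Require Import complex.
Set Implicit Arguments. Unset Strict Implicit. Unset Printing Implicit Defensive.
Import GRing.Theory Num.Theory.
Local Open Scope ring_scope.

Definition Rr := Rdefinitions.R.
Definition CC := Rr[i].

Definition bits (n : nat) := {ffun 'I_n -> bool}.

(* C^{2^n}: functions from the standard basis {|x> : x in {0,1}^n} to C,
   i.e. phi = \sum_x phi x |x>; a finite-dimensional vector space over C. *)
Definition qstate (n : nat) := {ffun bits n -> CC^o}.

Definition dotq n (phi psi : qstate n) : CC := \sum_x ((phi x)^* * psi x).

Definition flip n (i : 'I_n) (x : bits n) : bits n :=
  [ffun j => if j == i then ~~ x j else x j].

Definition del n (i : 'I_n) (x : bits n) : bits n.-1 :=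
  [ffun j => x (lift i j)].

Definition ctrl_flip n (i : 'I_n) (S : {set bits n.-1}) (x : bits n) : bits n :=
  if del i x \in S then flip i x else x.

(* E_{i,S} as a linear operator: the linear extension of |x> |-> |ctrl_flip x> *)
Definition E_op n (i : 'I_n) (S : {set bits n.-1}) (phi : qstate n) : qstate n :=
  [ffun y => \sum_(x | ctrl_flip i S x == y) phi x].

Definition E_bitflip n (X : qstate n -> qstate n) : Prop :=
  exists (i : 'I_n) (S : {set bits n.-1}), X = E_op i S.

Definition immune n (E : (qstate n -> qstate n) -> Prop)
    (M : {vspace qstate n}) (eps : Rr) : Prop :=
  forall X, E X -> forall phi, phi \in M ->
    (1 - (eps%:C)%C) * `|dotq phi phi| <= `|dotq phi (X phi)|.

From HB Require Import structures.
From mathcomp Require Import all_boot all_algebra.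
From mathcomp Require Import reals exp Rstruct.
From mathcomp Require Import complex.
From mathcomp Require Import ring lra zify.
Import order.Order.TTheory GRing.Theory Num.Theory.
Set Implicit Arguments. Unset Strict Implicit. Unset Printing Implicit Defensive.
Local Open Scope ring_scope.

(* A codeword for c : {0,1}^B -> C is a combination of Walsh characters
   x |-> (-1)^(sum_(j in R) x_j). Arrange the qubits as m = n %/ (B+1) columns
   of B+1 rows; the character attached to (b, k) lives on column k, on row 0 and
   on the rows selected by b. Distinct characters are orthogonal, so
   <phi, phi> = 2^n m |c|^2. A controlled flip of qubit i moves phi no further
   than the full flip of qubit i, which only negates the characters of the single
   column i %% m; hence <phi, E phi> >= (1 - 2/m) <phi, phi>, and
   2/m <= 8B/n <= 16 B ln n / n. *)

Lemma mul_conjCl_ge0 (x : CC) : 0 <= x^* * x.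
Proof. by rewrite mulrC mul_conjC_ge0. Qed.

Section Walsh.

Variable n : nat.

Definition walsh (S : {set 'I_n}) (x : bits n) : CC :=
  \prod_(j in S) (if x j then -1 else 1).

Lemma flipK (i : 'I_n) : involutive (flip i).
Proof.
by move=> x; apply/ffunP=> j; rewrite !ffunE; case: eqP => // _; rewrite negbK.
Qed.

Lemma card_bits : #|bits n| = (2 ^ n)%N.
Proof. by rewrite card_ffun card_bool card_ord. Qed.

Lemma walsh_flip (S : {set 'I_n}) i x :
  walsh S (flip i x) = (if i \in S then -1 else 1) * walsh S x.
Proof.
rewrite /walsh; case: ifP => iS; last first.
  rewrite mul1r; apply: eq_bigr => j jS; rewrite ffunE; case: eqP => // ji.
  by rewrite -ji jS in iS.
rewrite (bigD1 i) //= [in RHS](bigD1 i) //= mulrA; congr (_ * _).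
  by rewrite ffunE eqxx; case: (x i); rewrite /= ?mulN1r ?opprK ?mulr1.
by apply: eq_bigr => j /andP[_ ji]; rewrite ffunE (negbTE ji).
Qed.

Lemma conj_walsh (S : {set 'I_n}) x : (walsh S x)^* = walsh S x.
Proof.
apply: conj_Creal; apply: rpred_prod => j _.
by case: (x j); rewrite ?rpredN ?rpred1.
Qed.

Lemma walsh_mulK (S : {set 'I_n}) x : walsh S x * walsh S x = 1.
Proof.
rewrite /walsh -big_split /=; apply: big1 => j _.
by case: (x j); rewrite ?mulrNN mulr1.
Qed.

Lemma sum_walsh_mul (S T : {set 'I_n}) :
  \sum_x walsh S x * walsh T x = (2 ^ n)%:R * (S == T)%:R.
Proof.
have [<-|neST] := eqVneq S T.
  rewrite mulr1 (eq_bigr (fun _ => 1)) ?sumr_const ?card_bits // => x _.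
  exact: walsh_mulK.
rewrite mulr0.
have [i iST] : exists i, (i \in S) != (i \in T).
  apply/existsP; apply: contraR neST => /existsPn eqST.
  by apply/eqP/setP => i; apply/eqP; have := eqST i; rewrite negbK.
(* reindexing by x |-> flip i x changes the sign of every summand *)
set s := \sum_x _.
have s_opp : s = - s.
  rewrite {1}/s (reindex_inj (can_inj (flipK i))) -sumrN; apply: eq_bigr => x _.
  by rewrite !walsh_flip; move: iST; case: (i \in S); case: (i \in T) => //= _; ring.
have : s *+ 2 = 0 by rewrite mulr2n {2}s_opp subrr.
by move/eqP; rewrite mulrn_eq0 /= => /eqP.
Qed.

Variables (P : finType) (R : P -> {set 'I_n}).

Definition walsh_comb (a : P -> CC) : qstate n :=
  [ffun x => \sum_p a p * walsh (R p) x].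

Lemma dotq_walsh_comb (a b : P -> CC) : injective R ->
  dotq (walsh_comb a) (walsh_comb b) = (2 ^ n)%:R * \sum_p (a p)^* * b p.
Proof.
move=> R_inj; rewrite /dotq.
under eq_bigr => x _ do rewrite !ffunE rmorph_sum mulr_suml.
under eq_bigr => x _ do under eq_bigr => p _ do rewrite mulr_sumr.
rewrite exchange_big /= mulr_sumr; apply: eq_bigr => p _.
rewrite exchange_big /= (bigD1 p) //= [X in _ + X]big1 ?addr0 => [|q qp].
  rewrite (eq_bigr (fun x => (a p)^* * b p * (walsh (R p) x * walsh (R p) x))).
    by rewrite -mulr_sumr sum_walsh_mul eqxx mulr1 mulrC.
  by move=> x _; rewrite rmorphM /= conj_walsh; ring.
rewrite (eq_bigr (fun x => (a p)^* * b q * (walsh (R p) x * walsh (R q) x))).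
  by rewrite -mulr_sumr sum_walsh_mul (inj_eq R_inj) eq_sym (negbTE qp) !mulr0.
by move=> x _; rewrite rmorphM /= conj_walsh; ring.
Qed.

Lemma walsh_comb_subr_flip (a : P -> CC) i :
  [ffun y => walsh_comb a y - walsh_comb a (flip i y)] =
  walsh_comb (fun p => a p * (if i \in R p then 2 else 0)).
Proof.
apply/ffunP => y; rewrite !ffunE -sumrB; apply: eq_bigr => p _.
by rewrite walsh_flip; case: (i \in R p); ring.
Qed.

End Walsh.

Section ControlledFlips.

Variable n : nat.
Implicit Types (phi : qstate n) (i : 'I_n) (S : {set bits n.-1}).

Definition diff_comp (s : bits n -> bits n) phi : qstate n :=
  [ffun y => phi y - phi (s y)].

Lemma dotq_comp_involution (s : bits n -> bits n) phi : involutive s ->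
  dotq phi [ffun y => phi (s y)] =
  dotq phi phi - 2^-1 * dotq (diff_comp s phi) (diff_comp s phi).
Proof.
move=> sK.
have reindex (f : bits n -> CC) : \sum_y f (s y) = \sum_y f y.
  by rewrite [RHS](reindex_inj (can_inj sK)).
have -> : dotq (diff_comp s phi) (diff_comp s phi) =
    dotq phi phi + \sum_y (phi (s y))^* * phi (s y)
    - \sum_y (phi (s y))^* * phi y - \sum_y (phi y)^* * phi (s y).
  rewrite /dotq -!big_split -!sumrB; apply: eq_bigr => y _.
  by rewrite !ffunE rmorphB /=; ring.
rewrite (reindex (fun y => (phi y)^* * phi y)).
rewrite -(reindex (fun y => (phi (s y))^* * phi y)).
under [X in _ - X - _]eq_bigr => y _ do rewrite sK.
have -> : \sum_y (phi y)^* * phi (s y) = dotq phi [ffun y => phi (s y)].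
  by apply: eq_bigr => y _; rewrite ffunE.
by rewrite /dotq; field.
Qed.

Lemma ctrl_flipK i S : involutive (ctrl_flip i S).
Proof.
move=> x; rewrite /ctrl_flip.
have del_flip : del i (flip i x) = del i x.
  by apply/ffunP => j; rewrite !ffunE eq_sym (negbTE (neq_lift i j)).
by case: (boolP (del i x \in S)) => xS; rewrite ?del_flip ?(negbTE xS) ?xS ?flipK.
Qed.

Lemma E_op_ctrl_flip i S phi : E_op i S phi = [ffun y => phi (ctrl_flip i S y)].
Proof.
apply/ffunP => y; rewrite !ffunE (big_pred1 (ctrl_flip i S y)) // => x /=.
by apply/eqP/eqP => [<-|->]; rewrite ctrl_flipK.
Qed.

Lemma dotq_E_op_ge i S phi :
  dotq phi phi - 2^-1 * dotq (diff_comp (flip i) phi) (diff_comp (flip i) phi)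
  <= dotq phi (E_op i S phi).
Proof.
rewrite E_op_ctrl_flip (dotq_comp_involution _ (@ctrl_flipK i S)).
apply: lerB => //; apply: ler_wpM2l; first by rewrite invr_ge0 ler0n.
rewrite /dotq; apply: ler_sum => y _; rewrite !ffunE /ctrl_flip.
case: ifP => _; first by [].
by rewrite subrr mulr0 mul_conjCl_ge0.
Qed.

End ControlledFlips.

Lemma walsh_comb_E_op_ge n (P : finType) (R : P -> {set 'I_n}) (a : P -> CC)
    (i : 'I_n) (S : {set bits n.-1}) : injective R ->
  (2 ^ n)%:R * (\sum_p (a p)^* * a p - 2 * \sum_(p | i \in R p) (a p)^* * a p)
  <= dotq (walsh_comb R a) (E_op i S (walsh_comb R a)).
Proof.
move=> R_inj; apply: le_trans (dotq_E_op_ge i S _).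
set c := fun p => if i \in R p then 2 else 0 : CC.
have sum_flip_diff : \sum_p (a p * c p)^* * (a p * c p) =
                     4 * \sum_(p | i \in R p) (a p)^* * a p.
  rewrite [in RHS]big_mkcond mulr_sumr; apply: eq_bigr => p _; rewrite /c.
  case: (i \in R p); last by rewrite !mulr0.
  by rewrite rmorphM /= (conj_Creal (x := 2)) ?rpred_nat //; ring.
rewrite [diff_comp _ _]walsh_comb_subr_flip !dotq_walsh_comb // sum_flip_diff.
by rewrite le_eqVlt; apply/orP; left; apply/eqP; field.
Qed.

Lemma sum_pair_fst (V : nmodType) (T : finType) m (f : T -> V) :
  \sum_(p : T * 'I_m) f p.1 = (\sum_t f t) *+ m.
Proof.
rewrite -(pair_big xpredT xpredT (fun t (k : 'I_m) => f t)) /= -sumrMnl.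
by apply: eq_bigr => t _; rewrite sumr_const card_ord.
Qed.

Section BlockCode.

Variables n B m : nat.
Hypotheses (m_gt0 : (0 < m)%N) (Bm_le_n : (B.+1 * m <= n)%N).

(* Qubit i sits in column i %% m and row i %/ m. *)
Definition block_set (p : bits B * 'I_m) : {set 'I_n} :=
  [set i : 'I_n | (i %% m == p.2)%N &&
     ((i %/ m == 0)%N || [exists j : 'I_B, p.1 j && (i %/ m == j.+1)%N])].

Lemma block_set_inj : injective block_set.
Proof.
move=> [b k] [b' k'] eq_bk.
have k_lt_n : (k < n)%N by have := ltn_ord k; move: Bm_le_n; nia.
have eq_k : k = k'.
  have : Ordinal k_lt_n \in block_set (b, k).
    by rewrite inE /= modn_small // divn_small // !eqxx.
  by rewrite eq_bk inE /= modn_small // => /andP[/eqP k_eq _]; apply: val_inj.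
subst k'; congr (_, _); apply/ffunP => j.
have jk_lt_n : (j.+1 * m + k < n)%N.
  by have := ltn_ord k; have := ltn_ord j; move: Bm_le_n; nia.
have mem_jk (c : bits B) : (Ordinal jk_lt_n \in block_set (c, k)) = c j.
  rewrite inE /= modnMDl modn_small // eqxx /= divnMDl // divn_small // addn0 /=.
  apply/existsP/idP => [[j' /andP[cj /eqP [j_eq]]]|cj]; last first.
    by exists j; rewrite cj eqxx.
  by rewrite (_ : j = j') //; apply: val_inj.
by rewrite -mem_jk eq_bk mem_jk.
Qed.

Lemma sum_block_set_le (i : 'I_n) (f : bits B -> CC) : (forall b, 0 <= f b) ->
  \sum_(p | i \in block_set p) f p.1 <= \sum_b f b.
Proof.
move=> f_ge0; rewrite big_mkcond /=.
rewrite -(pair_big xpredT xpredT (fun b (k : 'I_m) =>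
            if i \in block_set (b, k) then f b else 0)) /=.
apply: ler_sum => b _; pose k0 : 'I_m := Ordinal (ltn_pmod i m_gt0).
apply: (@le_trans _ _ (\sum_(k : 'I_m | k == k0) f b)); last by rewrite big_pred1_eq.
rewrite [X in _ <= X]big_mkcond /=; apply: ler_sum => k _.
case: ifP => [|_]; last by case: ifP.
rewrite inE /= => /andP[/eqP i_mod _].
by rewrite (_ : k == k0) //; apply/eqP/val_inj; rewrite /= i_mod.
Qed.

Definition encode (c : {ffun bits B -> CC^o}) : qstate n :=
  walsh_comb block_set (fun p => c p.1).

Lemma encode_is_linear : linear encode.
Proof.
move=> a u v; apply/ffunP => x; rewrite !ffunE scaler_sumr -big_split /=.
by apply: eq_bigr => p _; rewrite !ffunE /= mulrDl scalerAl.
Qed.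

HB.instance Definition _ :=
  GRing.isLinear.Build CC {ffun bits B -> CC^o} (qstate n) *:%R encode
    encode_is_linear.

Lemma dotq_encode c c' :
  dotq (encode c) (encode c') = (2 ^ n * m)%:R * \sum_b (c b)^* * c' b.
Proof.
rewrite (dotq_walsh_comb _ _ block_set_inj).
by rewrite (sum_pair_fst m (fun b => (c b)^* * c' b)) -(mulr_natl _ m) mulrA -natrM.
Qed.

Lemma encode_inj : injective encode.
Proof.
move=> c1 c2 eq_enc; apply/ffunP => b; apply/eqP; rewrite -subr_eq0.
have : dotq (encode (c1 - c2)) (encode (c1 - c2)) = 0.
  by rewrite linearB /= eq_enc subrr /dotq big1 // => x _; rewrite ffunE mulr0.
rewrite dotq_encode => /eqP; rewrite mulf_eq0 pnatr_eq0 muln_eq0 expn_eq0 /=.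
rewrite (gtn_eqF m_gt0) /= psumr_eq0 => [/allP/(_ b (mem_index_enum b))|].
  by rewrite /= !ffunE mulf_eq0 conjC_eq0 orbb.
by move=> b' _; exact: mul_conjCl_ge0.
Qed.

Definition code_space : {vspace qstate n} := limg (linfun encode).

Lemma dim_code_space : \dim code_space = (2 ^ B)%N.
Proof.
rewrite /code_space limg_dim_eq; last first.
  have /lker0P/eqP -> : injective (linfun encode).
    by move=> x y; rewrite !lfunE; apply: encode_inj.
  exact: capv0.
by rewrite dimvf /dim /= card_ffun card_bool card_ord muln1.
Qed.

Lemma code_space_immune : immune (@E_bitflip n) code_space (2 / m%:R).
Proof.
move=> X [i [S ->]] _ /memv_imgP [c _ ->]; rewrite lfunE /=.
set Y := \sum_b (c b)^* * c b.
have Y_ge0 : 0 <= Y by apply: sumr_ge0 => b _; exact: mul_conjCl_ge0.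
have dotq_E_ge : (2 ^ n)%:R * (m%:R * Y - 2 * Y)
             <= dotq (encode c) (E_op i S (encode c)).
  apply: le_trans (walsh_comb_E_op_ge _ i S block_set_inj).
  rewrite (sum_pair_fst m (fun b => (c b)^* * c b)) -/Y -[Y *+ m]mulr_natl.
  rewrite ler_pM2l ?ltr0n ?expn_gt0 //.
  rewrite lerD2l lerN2 ler_pM2l ?ltr0n // sum_block_set_le // => b.
  exact: mul_conjCl_ge0.
have dotq_E_ge_real : (2 ^ n)%:R * (m%:R * Y - 2 * Y) \is Num.real.
  by rewrite rpredM ?rpred_nat ?rpredB ?rpredM ?rpred_nat ?ger0_real.
rewrite dotq_encode -/Y ger0_norm ?mulr_ge0 ?ler0n //.
apply: le_trans (real_ler_norm _); last by rewrite -(ler_real dotq_E_ge).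
apply: le_trans dotq_E_ge; rewrite fmorph_div !rmorph_nat le_eqVlt; apply/orP; left.
by apply/eqP; rewrite natrM; field; rewrite pnatr_eq0 -lt0n.
Qed.

End BlockCode.

Lemma ln_ge_half (x : Rr) : 2 <= x -> 1 / 2 <= ln x.
Proof.
move=> x_ge2; have ln_half : ln (1 + - (1 / 2) : Rr) <= - (1 / 2).
  by apply: le_ln1Dx; lra.
rewrite (_ : 1 + - (1 / 2) = 2^-1) ?lnV ?posrE ?ltr0n // in ln_half; last by field.
apply: (@le_trans _ _ (ln (2 : Rr))); first lra.
by rewrite ler_ln ?posrE ?ltr0n //; lra.
Qed.

Lemma two_div_le_log_rate (n B m : nat) : (0 < B)%N -> (0 < m)%N -> (2 <= n)%N ->
  (n <= 4 * B * m)%N -> 2 / m%:R <= 16 * (B%:R * ln (n%:R : Rr) / n%:R).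
Proof.
move=> B_gt0 m_gt0 n_ge2 n_le.
have ln_n : 1 / 2 <= ln (n%:R : Rr) by apply: ln_ge_half; rewrite (ler_nat _ 2).
have n_le' : (n%:R : Rr) <= 4 * B%:R * m%:R by rewrite -!natrM ler_nat.
have m_pos : (0 : Rr) < m%:R by rewrite ltr0n.
have n_pos : (0 : Rr) < n%:R by rewrite ltr0n; nia.
have Bm_ge0 : (0 : Rr) <= B%:R * m%:R by rewrite mulr_ge0 ?ler0n.
rewrite -subr_ge0.
have -> : 16 * (B%:R * ln (n%:R : Rr) / n%:R) - 2 / m%:R =
          (16 * B%:R * ln n%:R * m%:R - 2 * n%:R) / (m%:R * n%:R).
  by field; rewrite !gt_eqF.
apply: divr_ge0; last by rewrite mulr_ge0 // ltW.
have : 0 <= (B%:R * m%:R) * (ln (n%:R : Rr) - 1 / 2) by rewrite mulr_ge0 // subr_ge0.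
nra.
Qed.

Theorem theorem3 :
  exists C : Rr, forall n B : nat, (0 < B < n)%N ->
    exists M : {vspace qstate n},
      (2 ^ B <= \dim M)%N /\
      exists eps : Rr,
        eps <= C * (B%:R * ln (n%:R : Rr) / n%:R) /\ immune (@E_bitflip n) M eps.
Proof.
exists 16 => n B /andP[B_gt0 B_lt_n].
set m := (n %/ B.+1)%N.
have m_gt0 : (0 < m)%N by rewrite divn_gt0.
have Bm_le_n : (B.+1 * m <= n)%N by rewrite mulnC leq_divM.
exists (code_space n B m); split; first by rewrite dim_code_space.
exists (2 / m%:R); split; last exact: code_space_immune.
(* n < (B + 1)(m + 1) <= 4 B m *)
apply: two_div_le_log_rate => //; first nia.
by have := ltn_ceil n (ltn0Sn B); move: m_gt0; nia.
Qed.
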